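(* Let $M$ be an $\mathfrak{S}$-module, $\mathfrak{S}=\mathbb{Z}[t]/(t^p-1)$, with $\operatorname{im}(1-t)=M$. Then $N(t)=0$ on $M$ and $\ker(1-t)$ is a $\mathbb{Z}/p$-vector space. Let $(e_i)_{i\in I}$ be a basis of $\ker(1-t)$. Then there is an injective $\mathfrak{S}$-module map $\psi\colon\bigoplus_{i\in I}\mathbb{Z}[\vartheta,1/p]/(1-\vartheta)\mathbb{Z}[\vartheta]\to M$ with uniquely $p$-divisible cokernel.
   Context: $p$ is a prime, $N(t)=1+t+\dots+t^{p-1}$, $\vartheta$ is a primitive $p$-th root of unity, so $\mathbb{Z}[\vartheta]\cong\mathbb{Z}[t]/(N(t))$; $t$ acts on $\mathbb{Z}[\vartheta,1/p]/(1-\vartheta)\mathbb{Z}[\vartheta]$ by multiplication with $\vartheta$. Uniquely $p$-divisible means multiplication by $p$ is bijective. *)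

From HB Require Import structures.
From mathcomp Require Import all_boot all_order all_algebra all_field.
Set Implicit Arguments. Unset Strict Implicit. Unset Printing Implicit Defensive.
Import Order.TTheory GRing.Theory Num.Theory.
Local Open Scope ring_scope.

Definition in_Zth (th x : algC) : Prop :=
  exists f : {poly int}, x = (map_poly (fun z : int => z%:~R) f).[th].

Definition in_Zthp (p : nat) (th x : algC) : Prop :=
  exists k : nat, in_Zth th (x * (p%:R) ^+ k).

Definition in_ideal (th x : algC) : Prop :=
  exists y, in_Zth th y /\ x = (1 - th) * y.

Definition Nt (M : zmodType) (p : nat) (t : M -> M) (m : M) : M :=
  \sum_(j < p) iter j t m.

Definition is_basis_ker (M : zmodType) (p : nat) (t : M -> M)
    (I : eqType) (e : I -> M) : Prop :=
  (forall i, e i - t (e i) = 0) /\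
  (forall (s : seq I) (c : I -> nat), uniq s ->
      \sum_(i <- s) e i *+ c i = 0 -> forall i, i \in s -> (p %| c i)%N) /\
  (forall m, m - t m = 0 ->
      exists (s : seq I) (c : I -> nat), m = \sum_(i <- s) e i *+ c i).

(* image of the map psi : (+)_{i in I} Z[theta,1/p]/(1-theta)Z[theta] -> M,
   given by its components phi i (defined on representatives in algC) *)
Definition in_image (M : zmodType) (p : nat) (th : algC) (I : eqType)
    (phi : I -> algC -> M) (m : M) : Prop :=
  exists (s : seq I) (x : I -> algC),
    (forall i, i \in s -> in_Zthp p th (x i)) /\
    m = \sum_(i <- s) phi i (x i).

From HB Require Import structures.
From mathcomp Require Import all_boot all_order all_algebra all_field.
From mathcomp Require Import ring.
From Stdlib Require Import ClassicalEpsilon.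
Set Implicit Arguments. Unset Strict Implicit. Unset Printing Implicit Defensive.
Import Order.TTheory GRing.Theory Num.Theory.
Local Open Scope ring_scope.

(* Since 1 - t is onto, N(t) = (1 - t^p) / (1 - t) kills M, so that polynomials
   f(t) act on M through f(θ) only and M is a Z[θ]-module.  In Z[θ] some power of
   1 - θ is a multiple of p; hence M is p-divisible and its p-torsion is killed by
   a power of 1 - t.  Fix (1 - t)-preimages a_i(k+1) of a_i(k), starting from
   a_i(0) = e_i; then ψ_i maps x with x (1 - θ)^k = f(θ) to f(t) a_i(k).  A relation
   among the ψ_i at level k is pushed down by 1 - t to level 0, where the basis
   property of (e_i) shows that every coefficient lies in (1 - θ).  Elements killed
   by a power of 1 - t lie in the image of ψ by induction on the power, which gives
   the unique p-divisibility of the cokernel. *)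

Lemma mulrz_modz (V : zmodType) (v : V) (n : nat) (z : int) :
  v *+ n = 0 -> v *~ z = v *~ (z %% n)%Z.
Proof.
move=> vn0; rewrite {1}(divz_eq z n) mulrzDr mulrzA mulrzAC.
by rewrite -pmulrn vn0 mul0rz add0r.
Qed.

Lemma sum_count_mem (V : nmodType) (I : eqType) (F : I -> V) (s r : seq I) :
  uniq r -> {subset s <= r} ->
  \sum_(j <- s) F j = \sum_(j <- r) F j *+ count_mem j s.
Proof.
move=> r_uniq; elim: s => [|i s IHs] s_r; first by rewrite big_nil big1 // => j _.
have r_i : i \in r by apply: s_r; rewrite mem_head.
rewrite big_cons IHs => [|j s_j]; last by apply: s_r; rewrite inE s_j orbT.
under [RHS]eq_bigr => j _ do rewrite /= mulrnDr.
rewrite big_split /=; congr (_ + _).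
rewrite (bigD1_seq i) //= eqxx big1 ?addr0 // => j /negPf neq_ji.
by rewrite eq_sym neq_ji.
Qed.

Definition Npoly n : {poly int} := \sum_(i < n) 'X^i.

Lemma Npoly_at1 n : (Npoly n).[1] = n%:R.
Proof.
rewrite /Npoly horner_sum (eq_bigr (fun _ => 1)) ?sumr_const ?card_ord //.
by move=> i _; rewrite hornerXn expr1n.
Qed.

Lemma NpolyE n : Npoly n = \poly_(i < n) 1.
Proof. by rewrite poly_def; apply: eq_bigr => i _; rewrite scale1r. Qed.

Lemma size_Npoly n : size (Npoly n) = n.
Proof. by rewrite NpolyE size_poly_eq ?oner_neq0. Qed.

Lemma Npoly_monic n : (0 < n)%N -> Npoly n \is monic.
Proof. by move=> n_gt0; rewrite monicE NpolyE lead_coef_poly ?oner_neq0. Qed.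

Section PolyAction.
Variables (M : zmodType) (t : {additive M -> M}).
Implicit Types (f g : {poly int}) (m : M).

Lemma iter_raddfB n : {morph iter n t : a b / a - b}.
Proof. by elim: n => // n IHn a b /=; rewrite IHn raddfB. Qed.

Definition pact f m : M := \sum_(i < size f) iter i t m *~ f`_i.

Fact pact_is_zmod_morphism f : zmod_morphism (pact f).
Proof.
move=> a b; rewrite /pact -sumrB.
by apply: eq_bigr => i _; rewrite iter_raddfB mulrzBl.
Qed.

HB.instance Definition _ f :=
  GRing.isZmodMorphism.Build M M (pact f) (pact_is_zmod_morphism f).

Lemma pact_widen n f m :
  (size f <= n)%N -> pact f m = \sum_(i < n) iter i t m *~ f`_i.
Proof.
move=> le_f_n; rewrite /pact (big_ord_widen n (fun i => iter i t m *~ f`_i) le_f_n).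
rewrite big_mkcond; apply: eq_bigr => i _ /=.
by case: ltnP => // /(nth_default 0) ->; rewrite mulr0z.
Qed.

Lemma pact0 m : pact 0 m = 0.
Proof. by rewrite /pact size_poly0 big_ord0. Qed.

Lemma pactD f g m : pact (f + g) m = pact f m + pact g m.
Proof.
pose n := maxn (size f) (size g).
rewrite !(@pact_widen n) ?leq_maxl ?leq_maxr ?size_polyD //.
by rewrite -big_split; apply: eq_bigr => i _; rewrite coefD mulrzDr.
Qed.

Lemma pactN f m : pact (- f) m = - pact f m.
Proof. by apply/eqP; rewrite -subr_eq0 opprK -pactD addNr pact0. Qed.

Lemma pactB f g m : pact (f - g) m = pact f m - pact g m.
Proof. by rewrite pactD pactN. Qed.

Lemma pactZ (c : int) f m : pact (c *: f) m = pact f m *~ c.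
Proof.
rewrite (@pact_widen (size f)) ?size_scale_leq // /pact mulrz_suml.
by apply: eq_bigr => i _; rewrite coefZ mulrC mulrzA.
Qed.

Lemma pact1 m : pact 1 m = m.
Proof. by rewrite /pact size_poly1 big_ord1 coef1 mulr1z. Qed.

Lemma pactC c m : pact c%:P m = m *~ c.
Proof. by rewrite -alg_polyC pactZ pact1. Qed.

Lemma pact_comm f m : pact f (t m) = t (pact f m).
Proof. by rewrite /pact raddf_sum; apply: eq_bigr => i _; rewrite -iterSr raddfMz. Qed.

Lemma pactMX f m : pact (f * 'X) m = t (pact f m).
Proof.
have [->|nz_f] := eqVneq f 0; first by rewrite mul0r pact0 raddf0.
rewrite (@pact_widen (size f).+1) ?size_mulX // big_ord_recl coefMX mulr0z add0r.
by rewrite -pact_comm; apply: eq_bigr => i _; rewrite coefMX /= add0n -iterSr.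
Qed.

Lemma pactM f g m : pact (f * g) m = pact f (pact g m).
Proof.
elim/poly_ind: f => [|f c IHf]; first by rewrite mul0r !pact0.
by rewrite mulrDl !pactD mulrAC !pactMX IHf mul_polyC pactZ pactC.
Qed.

Lemma pactX m : pact 'X m = t m.
Proof. by rewrite -['X]mul1r pactMX pact1. Qed.

Lemma pactXn n m : pact 'X^n m = iter n t m.
Proof. by elim: n => [|n IHn]; rewrite ?expr0 ?pact1 // exprSr pactMX IHn. Qed.

Lemma pact_fixed f m : t m = m -> pact f m = m *~ f.[1].
Proof.
move=> tm; rewrite /pact horner_coef mulrz_sumr; apply: eq_bigr => i _.
by rewrite iter_fix // expr1n mulr1.
Qed.

Lemma pact_Npoly n m : pact (Npoly n) m = Nt n t m.
Proof.
rewrite /Npoly (big_morph (pact^~ m) (fun f g => pactD f g m) (pact0 m)).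
by apply: eq_bigr => i _; rewrite pactXn.
Qed.

End PolyAction.

Definition zeval (th : algC) : {rmorphism {poly int} -> algC} :=
  horner_morph (fun z : int => mulrC th z%:~R).

Lemma zevalX th : zeval th 'X = th.
Proof. exact: horner_morphX. Qed.

Lemma zevalC th c : zeval th c%:P = c%:~R.
Proof. exact: horner_morphC. Qed.

Lemma zeval_piXn th n : zeval th ((1 - 'X) ^+ n) = (1 - th) ^+ n.
Proof. by rewrite rmorphXn rmorphB rmorph1 zevalX. Qed.

Lemma zeval_at1 th g : exists q, zeval th g = g.[1]%:~R + (1 - th) * zeval th q.
Proof.
have /factor_theorem[q Dq]: root (g - g.[1]%:P) 1 by rewrite /root !hornerE subrr.
exists (- q); move: Dq; set c := g.[1] => /(canRL (subrK _)) ->.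
by rewrite rmorphD rmorphM rmorphB rmorphN zevalX !zevalC /=; ring.
Qed.

Lemma map_poly_ratr_intr (g : {poly int}) :
  map_poly ratr (map_poly (intr : int -> rat) g) = map_poly intr g :> {poly algC}.
Proof. by rewrite -map_poly_comp; apply: eq_map_poly => z /=; rewrite rmorph_int. Qed.

Lemma minCpoly_dvd th g : zeval th g = 0 -> minCpoly th %| map_poly intr g.
Proof.
have [pf [-> _] dv_pf] := minCpolyP th.
by rewrite -map_poly_ratr_intr dvdp_map -dv_pf map_poly_ratr_intr => g0; apply/eqP.
Qed.



Section PrimitiveRoot.
Variables (p : nat) (th : algC).
Hypotheses (p_pr : prime p) (th_prim : p.-primitive_root th).

Lemma pi_neq0 : 1 - th != 0.
Proof.
have := eq_prim_root_expr th_prim 1 0; rewrite expr1 expr0 subr_eq0 eq_sym => ->.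
by rewrite /eqn mod0n modn_small ?prime_gt1.
Qed.

Lemma zeval_Npoly : zeval th (Npoly p) = 0.
Proof.
have: zeval th (('X - 1) * Npoly p) = 0.
  by rewrite -subrX1 rmorphB rmorphXn rmorph1 zevalX prim_expr_order // subrr.
rewrite rmorphM rmorphB rmorph1 zevalX => /eqP.
by rewrite mulf_eq0 -oppr_eq0 opprB (negPf pi_neq0) => /eqP.
Qed.

Lemma minCpoly_Npoly : minCpoly th = map_poly intr (Npoly p).
Proof.
have p_gt0 := prime_gt0 p_pr.
have Nmon : (map_poly intr (Npoly p) : {poly algC}) \is monic.
  exact: monic_map (Npoly_monic p_gt0).
apply/eqP; rewrite -eqp_monic ?minCpoly_monic // -dvdp_size_eqp.
rewrite (minCpoly_cyclotomic th_prim) size_cyclotomic totient_prime // prednK //.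
  by rewrite size_map_inj_poly ?size_Npoly //; apply: intr_inj.
exact: minCpoly_dvd zeval_Npoly.
Qed.

Lemma zeval_eq0 f : zeval th f = 0 -> exists q, f = q * Npoly p.
Proof.
move=> f0; have Nmon := Npoly_monic (prime_gt0 p_pr).
pose q := Pdiv.Ring.rdivp f (Npoly p); pose r := Pdiv.Ring.rmodp f (Npoly p).
have Df : f = q * Npoly p + r := Pdiv.RingMonic.rdivp_eq Nmon f.
exists q; suff r0 : r = 0 by rewrite Df r0 addr0.
have /minCpoly_dvd dv_r : zeval th r = 0.
  by move: f0; rewrite Df rmorphD rmorphM zeval_Npoly mulr0 add0r.
have : (size r < p)%N by rewrite -[p in (_ < p)%N]size_Npoly Pdiv.Ring.ltn_rmodp monic_neq0.
apply: contraTeq => nz_r; rewrite -leqNgt.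
rewrite -[p in (p <= _)%N]size_Npoly -!(size_map_inj_poly (@intr_inj algC)) //.
rewrite -minCpoly_Npoly.
by apply: dvdp_leq dv_r; rewrite map_poly_eq0_id0 ?intr_eq0 ?lead_coef_eq0.
Qed.

Lemma prime_prod_pi : p%:R = \prod_(k < p | coprime k p) (1 - th ^+ k).
Proof.
have := congr1 (horner^~ 1) minCpoly_Npoly.
rewrite (minCpoly_cyclotomic th_prim) /cyclotomic horner_prod.
rewrite -[1 in RHS](rmorph1 (intr : int -> algC)) horner_map Npoly_at1 rmorph_nat => <-.
by apply: eq_bigr => k _; rewrite hornerXsubC.
Qed.

Lemma pi_pow_in_p : exists e h, (1 - th) ^+ e = p%:R * zeval th h.
Proof.
rewrite prime_prod_pi.
apply: (big_ind (fun x => exists e h, (1 - th) ^+ e = x * zeval th h)).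
- by exists 0%N, 1; rewrite rmorph1 mul1r expr0.
- move=> x y [e1 [h1 E1]] [e2 [h2 E2]]; exists (e1 + e2)%N, (h1 * h2).
  by rewrite exprD E1 E2 rmorphM mulrACA.
(* 1 - θ^k divides 1 - θ, since θ is in turn a power of the primitive root θ^k. *)
move=> k co_k; have thk_prim : p.-primitive_root (th ^+ k).
  by rewrite prim_root_exp_coprime.
have [j Dth] := prim_rootP thk_prim (prim_expr_order th_prim).
exists 1%N, (\sum_(i < j) 'X^(k * i)).
rewrite expr1 rmorph_sum (eq_bigr (fun i : 'I_j => (th ^+ k) ^+ i)); last first.
  by move=> i _; rewrite rmorphXn zevalX exprM.
by rewrite -[1 - th ^+ k]opprB mulNr -subrX1 -Dth opprB.
Qed.

Lemma p_in_pi : exists q, p%:R = (1 - th) * zeval th q.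
Proof.
have [q] := zeval_at1 th (Npoly p); rewrite zeval_Npoly Npoly_at1 rmorph_nat.
by move/eqP; rewrite eq_sym addr_eq0 => /eqP ->; exists (- q); rewrite rmorphN mulrN.
Qed.

Lemma zeval_in_pi g : (p%:Z %| g.[1])%Z -> exists y, zeval th g = (1 - th) * zeval th y.
Proof.
case/dvdzP=> c Dg; have [q ->] := zeval_at1 th g; have [q' Dp] := p_in_pi.
exists (c%:P * q' + q); rewrite Dg rmorphD !rmorphM zevalC -natz rmorph_nat Dp; ring.
Qed.

Lemma ZthpE x : in_Zthp p th x <-> exists k f, x * p%:R ^+ k = zeval th f.
Proof. by []. Qed.

Lemma Zthp_zeval f : in_Zthp p th (zeval th f).
Proof. by apply/ZthpE; exists 0%N, f; rewrite mulr1. Qed.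

Lemma Zthp_nat n : in_Zthp p th n%:R.
Proof. by have := Zthp_zeval (n%:Z)%:P; rewrite zevalC. Qed.

Lemma Zthp0 : in_Zthp p th 0.
Proof. by rewrite -(rmorph0 (zeval th)); apply: Zthp_zeval. Qed.

Lemma ZthpD x y : in_Zthp p th x -> in_Zthp p th y -> in_Zthp p th (x + y).
Proof.
move=> /ZthpE[k [f Df]] /ZthpE[l [g Dg]]; apply/ZthpE.
exists (k + l)%N, (f * (p%:Z)%:P ^+ l + g * (p%:Z)%:P ^+ k).
rewrite rmorphD !rmorphM !rmorphXn zevalC -natz rmorph_nat -Df -Dg exprD; ring.
Qed.

Lemma ZthpMn x n : in_Zthp p th x -> in_Zthp p th (x *+ n).
Proof.
move=> Zx; elim: n => [|n IHn]; last by rewrite mulrS; apply: ZthpD.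
by rewrite mulr0n; apply: Zthp0.
Qed.

Lemma Zthp_divp x : in_Zthp p th x -> in_Zthp p th (x / p%:R).
Proof.
move=> /ZthpE[k [f Df]]; apply/ZthpE; exists k.+1, f.
have p_neq0 : p%:R != 0 :> algC by rewrite pnatr_eq0 -lt0n prime_gt0.
by rewrite exprSr mulrA mulrAC divfK.
Qed.

Lemma Zthp_divpi x : in_Zthp p th x -> in_Zthp p th (x / (1 - th)).
Proof.
move=> /ZthpE[k [f Df]]; have [q Dp] := p_in_pi; apply/ZthpE; exists k.+1, (f * q).
by rewrite exprSr {2}Dp mulrA rmorphM -Df -!mulrA (mulrCA _ (1 - th)) mulKf ?pi_neq0.
Qed.

Lemma Zthp_pi_rep x : in_Zthp p th x -> exists k f, x * (1 - th) ^+ k = zeval th f.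
Proof.
move=> /ZthpE[k [f Df]]; have [e [h Dpi]] := pi_pow_in_p.
exists (e * k)%N, (f * h ^+ k).
by rewrite exprM Dpi exprMn mulrA Df rmorphM rmorphXn.
Qed.

(* An arbitrary pair when x has no such representation, i.e. outside Z[θ, 1/p]. *)
Definition zrep x : nat * {poly int} :=
  epsilon (inhabits (0%N, 0)) (fun kf => x * (1 - th) ^+ kf.1 = zeval th kf.2).

Lemma zrep_spec x k f : x * (1 - th) ^+ k = zeval th f ->
  x * (1 - th) ^+ (zrep x).1 = zeval th (zrep x).2.
Proof.
move=> Dx; rewrite /zrep; set P := fun kf : nat * {poly int} => _.
exact: (epsilon_spec _ P (ex_intro P (k, f) Dx)).
Qed.

Lemma zrepP x : in_Zthp p th x -> x * (1 - th) ^+ (zrep x).1 = zeval th (zrep x).2.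
Proof. by case/Zthp_pi_rep=> k [f]; apply: zrep_spec. Qed.

End PrimitiveRoot.


Section Module.
Variables (p : nat) (th : algC) (M : zmodType) (t : {additive M -> M}).
Hypotheses (p_pr : prime p) (th_prim : p.-primitive_root th).
Hypotheses (t_order : forall m, iter p t m = m)
           (t_pi_onto : forall m, exists m', m = m' - t m').

Local Notation pact := (pact t).

Lemma pact_pi m : pact (1 - 'X) m = m - t m.
Proof. by rewrite pactB pact1 pactX. Qed.

Lemma Nt_eq0 m : Nt p t m = 0.
Proof.
have [m' ->] := t_pi_onto m; rewrite -pact_pi -pact_Npoly -pactM.
have ->: Npoly p * (1 - 'X) = 1 - 'X^p by rewrite mulrC -opprB mulNr -subrX1 opprB.
by rewrite pactB pact1 pactXn t_order subrr.
Qed.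

Lemma pact_zeval0 f m : zeval th f = 0 -> pact f m = 0.
Proof. by case/(zeval_eq0 p_pr th_prim)=> q ->; rewrite pactM pact_Npoly Nt_eq0 raddf0. Qed.

Lemma eq_pact f g m : zeval th f = zeval th g -> pact f m = pact g m.
Proof.
by move=> fg; apply/eqP; rewrite -subr_eq0 -pactB pact_zeval0 // rmorphB fg subrr.
Qed.

Lemma fixed_torsion m : m - t m = 0 -> m *+ p = 0.
Proof.
move/eqP; rewrite subr_eq0 eq_sym => /eqP tm.
by rewrite -(Nt_eq0 m) -pact_Npoly pact_fixed // Npoly_at1 natz.
Qed.

Lemma pact_pi_expn e h m : (1 - th) ^+ e = p%:R * zeval th h ->
  pact ((1 - 'X) ^+ e) m = pact h m *+ p.
Proof.
move=> Dpi; rewrite (@eq_pact _ ((p%:Z)%:P * h)) ?pactM ?pactC //.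
by rewrite rmorphXn rmorphB rmorph1 zevalX Dpi rmorphM zevalC -natz rmorph_nat.
Qed.

Lemma pact_pi_expn_onto n m : exists m', m = pact ((1 - 'X) ^+ n) m'.
Proof.
elim: n m => [|n IHn] m; first by exists m; rewrite expr0 pact1.
have [m1 ->] := IHn m; have [m2 ->] := t_pi_onto m1.
by exists m2; rewrite exprSr pactM pact_pi.
Qed.

Lemma divisible_by_p m : exists m' : M, m = m' *+ p.
Proof.
have [e [h Dpi]] := pi_pow_in_p p_pr th_prim.
by have [m' ->] := pact_pi_expn_onto e m; exists (pact h m'); apply: pact_pi_expn.
Qed.

Definition pre m : M := sval (constructive_indefinite_description _ (t_pi_onto m)).

Lemma preK m : pre m - t (pre m) = m.
Proof. by rewrite /pre; case: constructive_indefinite_description. Qed.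

Local Notation pi_rep := (Zthp_pi_rep p_pr th_prim).

Section Psi.
Variables (I : eqType) (e : I -> M).
Hypothesis e_basis : is_basis_ker p t e.

Lemma e_fixed i : t (e i) = e i.
Proof. by apply/eqP; rewrite eq_sym -subr_eq0 e_basis.1. Qed.

Definition elift i k := iter k pre (e i).

Lemma elift_pi i k : elift i k.+1 - t (elift i k.+1) = elift i k.
Proof. exact: preK. Qed.

Lemma pact_pi_elift i k : pact (1 - 'X) (elift i k.+1) = elift i k.
Proof. by rewrite pact_pi elift_pi. Qed.

Lemma pact_pi_expn_elift i k d : pact ((1 - 'X) ^+ d) (elift i (k + d)) = elift i k.
Proof.
elim: d => [|d IHd]; first by rewrite expr0 pact1 addn0.
by rewrite exprSr pactM addnS pact_pi_elift.
Qed.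

Lemma pact_elift_rep i x k f l g :
  x * (1 - th) ^+ k = zeval th f -> x * (1 - th) ^+ l = zeval th g ->
  pact f (elift i k) = pact g (elift i l).
Proof.
wlog le_kl : k f l g / (k <= l)%N => [wlog_kl Df Dg|Df Dg].
  case: (leqP k l) => [le_kl|/ltnW le_lk]; first exact: wlog_kl.
  by symmetry; apply: wlog_kl.
rewrite -(subnKC le_kl) -[in LHS](pact_pi_expn_elift i k (l - k)) -pactM.
by apply: eq_pact; rewrite rmorphM zeval_piXn -Df -Dg -mulrA -exprD subnKC.
Qed.

Definition psi i x := pact (zrep th x).2 (elift i (zrep th x).1).

Lemma psiE i x k f : x * (1 - th) ^+ k = zeval th f -> psi i x = pact f (elift i k).
Proof. by move=> Dx; apply: pact_elift_rep (zrep_spec Dx) Dx. Qed.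

Lemma psi0 i : psi i 0 = 0.
Proof. by rewrite (@psiE i 0 0 0) ?pact0 // mul0r rmorph0. Qed.

Lemma psiD i x y : in_Zthp p th x -> in_Zthp p th y -> psi i (x + y) = psi i x + psi i y.
Proof.
case/pi_rep=> k [f Df] /pi_rep[l [g Dg]]; rewrite (psiE i Df) (psiE i Dg).
rewrite (@psiE i _ (k + l) (f * (1 - 'X) ^+ l + g * (1 - 'X) ^+ k)).
  by rewrite pactD !pactM pact_pi_expn_elift addnC pact_pi_expn_elift.
by rewrite rmorphD !rmorphM !zeval_piXn -Df -Dg exprD; ring.
Qed.

Lemma psiMn i x n : in_Zthp p th x -> psi i (x *+ n) = psi i x *+ n.
Proof.
move=> Zx; elim: n => [|n IHn]; first by rewrite !mulr0n psi0.
by rewrite !mulrS psiD ?IHn //; apply: ZthpMn.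
Qed.

Lemma psi_comm i x : in_Zthp p th x -> psi i (th * x) = t (psi i x).
Proof.
case/pi_rep=> k [f Df]; rewrite (psiE i Df) (@psiE i _ k (f * 'X)) ?pactMX //.
by rewrite rmorphM zevalX -Df; ring.
Qed.

Lemma psi_ideal i x : in_ideal th x -> psi i x = 0.
Proof.
case=> _ [[g ->] ->]; rewrite (@psiE i _ 0 (g * (1 - 'X))).
  by rewrite pactM pact_pi /elift /= e_basis.1 raddf0.
by rewrite mulr1 rmorphM rmorphB rmorph1 zevalX mulrC.
Qed.

Lemma psi_inj_level0 s g : uniq s -> \sum_(i <- s) pact (g i) (e i) = 0 ->
  forall i, i \in s -> exists y, zeval th (g i) = (1 - th) * zeval th y.
Proof.
move=> s_uniq sum0 i s_i; apply: (zeval_in_pi p_pr th_prim).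
have p_neq0 : p%:Z != 0 by rewrite eqz_nat -lt0n prime_gt0.
pose c j := `|((g j).[1] %% p)%Z|%N.
have Dc j : ((g j).[1] %% p)%Z = c j by rewrite /c gez0_abs // modz_ge0.
have p_c : (p %| c i)%N.
  apply: (e_basis.2.1 s c s_uniq _ i s_i); rewrite -[in RHS]sum0; apply: eq_bigr => j _.
  by rewrite pact_fixed ?e_fixed // (mulrz_modz _ (fixed_torsion (e_basis.1 j))) Dc.
by rewrite (divz_eq (g i).[1] p) Dc rpredD ?dvdz_mull.
Qed.

(* Applying 1 - t lowers the level; at level 0 the basis property of e applies. *)
Lemma psi_inj_level s : uniq s -> forall K f,
  \sum_(i <- s) pact (f i) (elift i K) = 0 ->
  forall i, i \in s -> exists y, zeval th (f i) = (1 - th) ^+ K.+1 * zeval th y.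
Proof.
move=> s_uniq; elim=> [|K IHK] f sum0.
  by move=> i /(psi_inj_level0 s_uniq sum0)[y Dy]; exists y; rewrite expr1.
have /IHK IHf : \sum_(i <- s) pact (f i) (elift i K) = 0.
  rewrite -[RHS](raddf0 (pact (1 - 'X))) -[in RHS]sum0 raddf_sum.
  apply: eq_bigr => i _.
  by rewrite [RHS]/= -!pactM mulrC pactM pact_pi_elift.
pose y i := epsilon (inhabits 0) (fun y => zeval th (f i) = (1 - th) ^+ K.+1 * zeval th y).
have Dy i : i \in s -> zeval th (f i) = (1 - th) ^+ K.+1 * zeval th (y i).
  by move=> s_i; apply: (epsilon_spec _ _ (IHf i s_i)).
have sum_y0 : \sum_(i <- s) pact (y i) (e i) = 0.
  rewrite -[in RHS]sum0 big_seq_cond [RHS]big_seq_cond; apply: eq_bigr => i /andP[s_i _].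
  rewrite (@eq_pact (f i) (y i * (1 - 'X) ^+ K.+1)); last first.
    by rewrite rmorphM zeval_piXn mulrC Dy.
  by rewrite pactM -(add0n K.+1) pact_pi_expn_elift.
move=> i s_i; have [z Dz] := psi_inj_level0 s_uniq sum_y0 s_i.
by exists z; rewrite Dy // Dz mulrA -exprSr.
Qed.

Lemma psi_inj s x : uniq s -> (forall i, i \in s -> in_Zthp p th (x i)) ->
  \sum_(i <- s) psi i (x i) = 0 -> forall i, i \in s -> in_ideal th (x i).
Proof.
move=> s_uniq Zx sum0; pose K := (\sum_(i <- s) (zrep th (x i)).1)%N.
have le_K i : i \in s -> ((zrep th (x i)).1 <= K)%N.
  by move=> s_i; rewrite /K (bigD1_seq i) //= leq_addr.
pose F i := (zrep th (x i)).2 * (1 - 'X) ^+ (K - (zrep th (x i)).1).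
have DF i : i \in s -> x i * (1 - th) ^+ K = zeval th (F i).
  move=> s_i; rewrite rmorphM zeval_piXn -(zrepP p_pr th_prim (Zx i s_i)).
  by rewrite -mulrA -exprD subnKC ?le_K.
have sumF0 : \sum_(i <- s) pact (F i) (elift i K) = 0.
  rewrite -[in RHS]sum0 big_seq_cond [RHS]big_seq_cond; apply: eq_bigr => i /andP[s_i _].
  by rewrite (psiE i (DF i s_i)).
move=> i s_i; have [y Dy] := psi_inj_level s_uniq sumF0 s_i.
exists (zeval th y); split; first by exists y.
apply: (mulIf (expf_neq0 K (pi_neq0 p_pr th_prim))).
by rewrite DF // Dy exprSr [RHS]mulrC mulrA.
Qed.

Local Notation img := (in_image p th psi).

Lemma img0 : img 0.
Proof. by exists [::], (fun _ => 0); split; rewrite ?big_nil. Qed.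

Lemma img_psi_sum s x : (forall i, i \in s -> in_Zthp p th (x i)) ->
  img (\sum_(i <- s) psi i (x i)).
Proof. by exists s, x. Qed.

Lemma imgD m1 m2 : img m1 -> img m2 -> img (m1 + m2).
Proof.
case=> s1 [x1 [Zx1 ->]] [s2 [x2 [Zx2 ->]]].
pose y (s : seq I) (x : I -> algC) j := x j *+ count_mem j s.
have Zy s x j : (forall i, i \in s -> in_Zthp p th (x i)) -> in_Zthp p th (y s x j).
  move=> Zx; rewrite /y; have [/Zx/ZthpMn//|/count_memPn->] := boolP (j \in s).
  by rewrite mulr0n; apply: Zthp0.
have Dy s x j : (forall i, i \in s -> in_Zthp p th (x i)) ->
    psi j (y s x j) = psi j (x j) *+ count_mem j s.
  move=> Zx; rewrite /y; have [/Zx/psiMn//|/count_memPn->] := boolP (j \in s).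
  by rewrite !mulr0n psi0.
pose r := undup (s1 ++ s2).
have r_s1 : {subset s1 <= r} by move=> j s_j; rewrite mem_undup mem_cat s_j.
have r_s2 : {subset s2 <= r} by move=> j s_j; rewrite mem_undup mem_cat s_j orbT.
rewrite (sum_count_mem _ (undup_uniq _) r_s1) (sum_count_mem _ (undup_uniq _) r_s2).
rewrite -big_split /= (eq_bigr (fun j => psi j (y s1 x1 j + y s2 x2 j))) => [|j _].
  by apply: img_psi_sum => j _; apply: ZthpD; apply: Zy.
by rewrite psiD ?(Dy s1 x1) ?(Dy s2 x2) //; apply: Zy.
Qed.

Lemma img_psi i x : in_Zthp p th x -> img (psi i x).
Proof. by move=> Zx; exists [:: i], (fun _ => x); rewrite big_seq1. Qed.

Lemma img_sum s (F : I -> M) : (forall j, img (F j)) -> img (\sum_(j <- s) F j).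
Proof. by move=> imgF; apply: (big_ind img img0 imgD) => j _. Qed.

Lemma img_fixed m : m - t m = 0 -> img m.
Proof.
case/e_basis.2.2=> s [c ->]; apply: img_sum => i.
have ->: e i *+ c i = psi i (c i)%:R.
  by rewrite (@psiE i _ 0 (c i)%:Z%:P) ?pactC // mulr1 zevalC.
exact/img_psi/Zthp_nat.
Qed.

Lemma psi_divpi i x : in_Zthp p th x ->
  psi i (x / (1 - th)) - t (psi i (x / (1 - th))) = psi i x.
Proof.
case/pi_rep=> k [f Df]; rewrite (psiE i Df) (@psiE i _ k.+1 f).
  by rewrite -pact_comm -raddfB elift_pi.
by rewrite exprSr mulrA mulrAC divfK ?(pi_neq0 p_pr th_prim).
Qed.

Lemma ker_pi_expn_img n m : pact ((1 - 'X) ^+ n) m = 0 -> img m.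
Proof.
elim: n m => [|n IHn] m; first by rewrite expr0 pact1 => ->; apply: img0.
rewrite exprSr pactM pact_pi => /IHn[s [x [Zx Dm]]].
pose w := \sum_(i <- s) psi i (x i / (1 - th)).
have Dw : pact (1 - 'X) w = pact (1 - 'X) m.
  rewrite !pact_pi Dm /w raddf_sum -sumrB big_seq_cond [RHS]big_seq_cond.
  by apply: eq_bigr => i /andP[s_i _]; rewrite psi_divpi //; apply: Zx.
rewrite -(subrK w m); apply: imgD; last by apply: img_psi_sum => i s_i; apply/Zthp_divpi/Zx.
by apply: img_fixed; rewrite -pact_pi raddfB /= Dw subrr.
Qed.

Lemma img_divp m : img (m *+ p) -> img m.
Proof.
case=> s [x [Zx Dm]]; pose w := \sum_(i <- s) psi i (x i / p%:R).
have p_neq0 : p%:R != 0 :> algC by rewrite pnatr_eq0 -lt0n prime_gt0.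
have Dw : m *+ p = w *+ p.
  rewrite Dm /w -sumrMnl big_seq_cond [RHS]big_seq_cond.
  apply: eq_bigr => i /andP[s_i _]; rewrite -psiMn; last exact/Zthp_divp/Zx.
  by rewrite -[x i / p%:R *+ p]mulr_natr divfK.
have [n [h Dpi]] := pi_pow_in_p p_pr th_prim.
rewrite -(subrK w m); apply: imgD; last by apply: img_psi_sum => i s_i; apply/Zthp_divp/Zx.
apply: (@ker_pi_expn_img n).
by rewrite (pact_pi_expn _ Dpi) -raddfMn /= mulrnBl Dw subrr raddf0.
Qed.

End Psi.
End Module.

Theorem lemma6p8 (p : nat) (th : algC) (M : zmodType) (t : {additive M -> M}) :
  prime p -> p.-primitive_root th ->
  (forall m : M, iter p t m = m) ->
  (forall m : M, exists m' : M, m = m' - t m') ->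
  (forall m : M, Nt p t m = 0) /\
  (forall m : M, m - t m = 0 -> m *+ p = 0) /\
  (forall (I : eqType) (e : I -> M), is_basis_ker p t e ->
    exists phi : I -> algC -> M,
      (* each component is additive on Z[theta,1/p] *)
      (forall i x y, in_Zthp p th x -> in_Zthp p th y ->
         phi i (x + y) = phi i x + phi i y) /\
      (* and t-equivariant (t acts as multiplication by theta) *)
      (forall i x, in_Zthp p th x -> phi i (th * x) = t (phi i x)) /\
      (* and vanishes on (1 - theta) Z[theta], so factors through the quotient *)
      (forall i x, in_ideal th x -> phi i x = 0) /\
      (* the induced map on the direct sum is injective *)
      (forall (s : seq I) (x : I -> algC), uniq s ->
         (forall i, i \in s -> in_Zthp p th (x i)) ->
         \sum_(i <- s) phi i (x i) = 0 ->
         forall i, i \in s -> in_ideal th (x i)) /\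
      (* the cokernel is uniquely p-divisible: p is surjective ... *)
      (forall m : M, exists m' : M, in_image p th phi (m - m' *+ p)) /\
      (* ... and injective *)
      (forall m : M, in_image p th phi (m *+ p) -> in_image p th phi m)).
Proof.
move=> p_pr th_prim t_order t_pi_onto.
split; first exact: Nt_eq0.
split; first exact: fixed_torsion.
move=> I e e_basis; exists (psi th t_pi_onto e).
split; first exact: psiD.
split; first exact: psi_comm.
split; first exact: (psi_ideal p_pr th_prim t_order).
split; first exact: psi_inj.
split; last exact: img_divp.
move=> m; have [m' Dm] := divisible_by_p p_pr th_prim t_order t_pi_onto m.
by exists m'; rewrite -Dm subrr; apply: img0.
Qed.
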